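(* Let $1\le r\le K\le d$ and let $\bm{A}=\begin{bmatrix}\widetilde{\bm{A}}&\bm{0}\\\bm{0}&\bm{0}\end{bmatrix}\in\mathbb{R}^{d\times K}$ with $\widetilde{\bm{A}}=\operatorname{diag}(a_1,\ldots,a_r)$, $a_1\ge\cdots\ge a_r>0$. Let $R(\bm{Q})=\bm{A}-\bm{Q}\bm{A}^T\bm{Q}$. For $\bm{Q}\in{\rm St}(d,K)$ partitioned as $\bm{Q}=\begin{bmatrix}\bm{Q}_1&\bm{Q}_2\\\bm{Q}_3&\bm{Q}_4\end{bmatrix}$ with $\bm{Q}_1\in\mathbb{R}^{r\times r}$, $\bm{Q}_2\in\mathbb{R}^{r\times(K-r)}$, $\bm{Q}_3\in\mathbb{R}^{(d-r)\times r}$, $\bm{Q}_4\in\mathbb{R}^{(d-r)\times(K-r)}$, we have $$a_r^2\|\bm{Q}_2\|_F^2\le\|R(\bm{Q})\|_F^2,\qquad a_r^2\|\bm{Q}_3\|_F^2\le\|R(\bm{Q})\|_F^2,\qquad\min_{\bm{V}\in{\rm St}(d-r,K-r)}\|\bm{Q}_4-\bm{V}\|_F^2\le\|\bm{Q}_2\|_F^2.$$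
   Context: ${\rm St}(m,k)=\{\bm{V}\in\mathbb{R}^{m\times k}:\bm{V}^T\bm{V}=\bm{I}_k\}$. *)

From mathcomp Require Import all_boot all_order all_algebra.
From mathcomp Require Import reals.
Set Implicit Arguments. Unset Strict Implicit. Unset Printing Implicit Defensive.
Import Order.TTheory GRing.Theory Num.Theory.
Local Open Scope ring_scope.

Definition frob2 (R : realType) (m n : nat) (M : 'M[R]_(m, n)) : R :=
  \sum_(i < m) \sum_(j < n) M i j ^+ 2.

Definition stiefel (R : realType) (m n : nat) (V : 'M[R]_(m, n)) : Prop :=
  V^T *m V = 1%:M.

Definition Amat (R : realType) (r m n : nat) (a : 'rV[R]_r) : 'M[R]_(r + m, r + n) :=
  block_mx (diag_mx a) 0 0 0.

Definition resid (R : realType) (r m n : nat) (a : 'rV[R]_r)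
  (Q : 'M[R]_(r + m, r + n)) : 'M[R]_(r + m, r + n) :=
  Amat m n a - Q *m (Amat m n a)^T *m Q.

From mathcomp Require Import all_boot all_order all_algebra.
From mathcomp Require Import reals.
From mathcomp Require Import ring lra zify.
From mathcomp Require Import complex.

(* Put B := A^T Q.  Because Q^T Q = 1, one has
   |R(Q)|^2 = |A|^2 - |B|^2 + |B - B^T|^2, and B has the rows (D Q1, D Q2) on
   top of zeros, with D = diag(a).  As |B - B^T|^2 >= |D Q2|^2, this gives
   |R(Q)|^2 >= sum_i a_i^2 (1 - |row_i Q1|^2).  A row of Q has norm at most 1,
   so |row_i Q2|^2 <= 1 - |row_i Q1|^2, and |Q3|^2 = r - |Q1|^2 =
   sum_i (1 - |row_i Q1|^2); bounding a_i by a_r gives the first two claims.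
   For the third, Q4 is a contraction, so it has a polar factor V in
   St(d-r, K-r) with tr(V^T Q4) >= |Q4|^2.  Then
   |Q4 - V|^2 = |Q4|^2 - 2 tr(V^T Q4) + (K-r) <= (K-r) - |Q4|^2 = |Q2|^2.
   The polar factor is built one singular pair at a time: a singular pair
   comes from a unit eigenvector of M^T M, which exists because a real
   symmetric matrix has a real eigenvalue, and two Householder reflections
   move it to the first coordinate vectors, splitting off a 1 x 1 block. *)

Set Implicit Arguments.
Unset Strict Implicit.
Unset Printing Implicit Defensive.

Import Order.TTheory GRing.Theory Num.Theory.
Local Open Scope ring_scope.

Section FrobeniusNorm.
Variable R : realType.

Lemma frob2_tr m n (M : 'M[R]_(m, n)) : frob2 M = \tr (M^T *m M).
Proof.
rewrite /frob2 /mxtrace exchange_big; apply: eq_bigr => j _; rewrite !mxE.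
by apply: eq_bigr => i _; rewrite !mxE expr2.
Qed.

Lemma frob2_ge0 m n (M : 'M[R]_(m, n)) : 0 <= frob2 M.
Proof. by apply: sumr_ge0 => i _; apply: sumr_ge0 => j _; apply: sqr_ge0. Qed.

Lemma frob20 m n : frob2 (0 : 'M[R]_(m, n)) = 0.
Proof. by rewrite /frob2 big1 // => i _; rewrite big1 // => j _; rewrite mxE expr0n. Qed.

Lemma frob2_eq0 m n (M : 'M[R]_(m, n)) : (frob2 M == 0) = (M == 0).
Proof.
apply/eqP/eqP => [M0|->]; last exact: frob20.
have := psumr_eq0P (fun i _ => sumr_ge0 _ (fun j _ => sqr_ge0 (M i j))) M0.
move=> rows0; apply/matrixP => i j; rewrite mxE.
have /eqP := psumr_eq0P (fun j _ => sqr_ge0 (M i j)) (rows0 i isT) (i := j) isT.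
by rewrite sqrf_eq0 => /eqP.
Qed.

Lemma frob2_gt0 m n (M : 'M[R]_(m, n)) : (0 < frob2 M) = (M != 0).
Proof. by rewrite lt_def frob2_ge0 frob2_eq0 andbT. Qed.

Lemma frob2_trmx m n (M : 'M[R]_(m, n)) : frob2 M^T = frob2 M.
Proof.
by rewrite /frob2 exchange_big; apply: eq_bigr => j _; apply: eq_bigr => i _; rewrite mxE.
Qed.

Lemma frob2Z m n a (M : 'M[R]_(m, n)) : frob2 (a *: M) = a ^+ 2 * frob2 M.
Proof.
rewrite /frob2 mulr_sumr; apply: eq_bigr => i _; rewrite mulr_sumr.
by apply: eq_bigr => j _; rewrite mxE exprMn.
Qed.

Lemma frob2_scalar1 (s : R) : frob2 (s%:M : 'M[R]_1) = s ^+ 2.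
Proof. by rewrite /frob2 !big_ord1 mxE mulr1n. Qed.

Lemma frob2_rows m n (M : 'M[R]_(m, n)) : frob2 M = \sum_i frob2 (row i M).
Proof.
by apply: eq_bigr => i _; rewrite /frob2 big_ord1; apply: eq_bigr => j _; rewrite mxE.
Qed.

Lemma frob2_col_mx m1 m2 n (A : 'M[R]_(m1, n)) (B : 'M[R]_(m2, n)) :
  frob2 (col_mx A B) = frob2 A + frob2 B.
Proof.
rewrite /frob2 big_split_ord /=; congr (_ + _).
  by apply: eq_bigr => i _; apply: eq_bigr => j _; rewrite col_mxEu.
by apply: eq_bigr => i _; apply: eq_bigr => j _; rewrite col_mxEd.
Qed.

Lemma frob2_row_mx m n1 n2 (A : 'M[R]_(m, n1)) (B : 'M[R]_(m, n2)) :
  frob2 (row_mx A B) = frob2 A + frob2 B.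
Proof. by rewrite -frob2_trmx tr_row_mx frob2_col_mx !frob2_trmx. Qed.

Lemma frob2_block m1 m2 n1 n2 (A : 'M[R]_(m1, n1)) (B : 'M[R]_(m1, n2))
  (C : 'M[R]_(m2, n1)) (D : 'M[R]_(m2, n2)) :
  frob2 (block_mx A B C D) = frob2 A + frob2 B + frob2 C + frob2 D.
Proof. by rewrite /block_mx frob2_col_mx !frob2_row_mx addrA. Qed.

Lemma frob2_diag_mul r n (a : 'rV[R]_r) (X : 'M[R]_(r, n)) :
  frob2 (diag_mx a *m X) = \sum_i a 0 i ^+ 2 * frob2 (row i X).
Proof.
rewrite mul_diag_mx frob2_rows; apply: eq_bigr => i _.
by rewrite -frob2Z; congr frob2; apply/rowP => j; rewrite !mxE.
Qed.

Lemma trmx11 (A : 'M[R]_1) : A^T = A.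
Proof. by rewrite [A]mx11_scalar tr_scalar_mx. Qed.

Lemma trmx_mul_cV n (v : 'cV[R]_n) : v^T *m v = (frob2 v)%:M.
Proof. by rewrite frob2_tr [LHS]mx11_scalar trace_mx11. Qed.

Lemma mul_rV_trmx n (v : 'rV[R]_n) : v *m v^T = (frob2 v)%:M.
Proof. by rewrite -{1}(trmxK v) trmx_mul_cV frob2_trmx. Qed.

Lemma frob2_delta_cV n (i : 'I_n) : frob2 (delta_mx i 0 : 'cV[R]_n) = 1.
Proof. by rewrite frob2_tr trmx_delta mul_delta_mx trace_mx11 mxE !eqxx. Qed.

Lemma frob2_normalize n (v : 'cV[R]_n) :
  v != 0 -> frob2 ((Num.sqrt (frob2 v))^-1 *: v) = 1.
Proof.
rewrite -frob2_gt0 => v_gt0.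
by rewrite frob2Z exprVn sqr_sqrtr ?mulVf ?gt_eqF ?ltW.
Qed.

Lemma frob2_stiefel_mull m n p (G : 'M[R]_(p, m)) (X : 'M[R]_(m, n)) :
  stiefel G -> frob2 (G *m X) = frob2 X.
Proof. by move=> hG; rewrite !frob2_tr trmx_mul mulmxA -(mulmxA X^T) hG mulmx1. Qed.

Lemma frob2_stiefel_mulr m n (X : 'M[R]_(m, n)) (H : 'M[R]_n) :
  stiefel H^T -> frob2 (X *m H) = frob2 X.
Proof. by move=> hH; rewrite -frob2_trmx trmx_mul frob2_stiefel_mull // frob2_trmx. Qed.

Lemma stiefel_trmx n (H : 'M[R]_n) : stiefel H -> stiefel H^T.
Proof. by rewrite /stiefel trmxK; apply: mulmx1C. Qed.

Lemma stiefel_mul m n p (A : 'M[R]_(m, n)) (B : 'M[R]_(n, p)) :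
  stiefel A -> stiefel B -> stiefel (A *m B).
Proof.
by rewrite /stiefel trmx_mul => hA hB; rewrite mulmxA -(mulmxA B^T) hA mulmx1.
Qed.

Lemma stiefel_row_le1 m n (Q : 'M[R]_(m, n)) i : stiefel Q -> frob2 (row i Q) <= 1.
Proof.
move=> hQ; set P := Q *m Q^T.
have PP : P *m P = P by rewrite /P mulmxA -(mulmxA Q) hQ mulmx1.
have Pii : P i i = frob2 (row i Q).
  by rewrite /P mxE /frob2 big_ord1; apply: eq_bigr => j _; rewrite !mxE expr2.
have PiiE : P i i = \sum_k P i k ^+ 2.
  rewrite -{1}PP mxE; apply: eq_bigr => k _; rewrite expr2; congr (_ * _).
  by rewrite /P !mxE; apply: eq_bigr => j _; rewrite !mxE mulrC.
have Pii_ge0 : 0 <= P i i by rewrite Pii frob2_ge0.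
have : P i i ^+ 2 <= P i i.
  rewrite [leRHS]PiiE (bigD1 i) //= lerDl.
  by apply: sumr_ge0 => k _; apply: sqr_ge0.
rewrite -Pii; nra.
Qed.

End FrobeniusNorm.

Section SymmetricEigenvector.
Variable R : realType.

Local Open Scope complex_scope.

Lemma ReM (z w : R[i]) :
  complex.Re (z * w) = complex.Re z * complex.Re w - complex.Im z * complex.Im w.
Proof. by case: z => ? ?; case: w. Qed.

Lemma ImM (z w : R[i]) :
  complex.Im (z * w) = complex.Re z * complex.Im w + complex.Im z * complex.Re w.
Proof. by case: z => ? ?; case: w. Qed.

Lemma symmetric_unit_eigenvector_of_row n (S : 'M[R]_n) (t : 'rV[R]_n) (l : R) :
  S^T = S -> t *m S = l *: t -> t != 0 ->
  exists v : 'cV[R]_n, S *m v = l *: v /\ frob2 v = 1.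
Proof.
move=> symS tS t_neq0; exists ((Num.sqrt (frob2 t^T))^-1 *: t^T); split.
  by rewrite -scalemxAr -{1}symS -trmx_mul tS linearZ scalerA mulrC -scalerA.
by apply: frob2_normalize; rewrite trmx_eq0.
Qed.

(* If x + i y is a complex eigenvector for p + i q, the symmetry of S gives
   q (|x|^2 + |y|^2) = 0, so x or y is a real eigenvector. *)
Lemma symmetric_unit_eigenvector n (S : 'M[R]_n.+1) : S^T = S ->
  exists l (v : 'cV[R]_n.+1), S *m v = l *: v /\ frob2 v = 1.
Proof.
move=> symS; set Sc := map_mx (real_complex R) S.
have [z /eigenvalueP [w wSc w_neq0]] := eigenvalue_closed Sc (ltn0Sn n).
set x := map_mx (@complex.Re R) w; set y := map_mx (@complex.Im R) w.
set p := complex.Re z; set q := complex.Im z.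
have xS : x *m S = p *: x - q *: y.
  apply/rowP => j; have /rowP/(_ j) := wSc; rewrite !mxE => /(congr1 (@complex.Re R)).
  rewrite raddf_sum ReM => <-.
  by apply: eq_bigr => i _; rewrite !mxE; case: (w 0 i) => ? ? /=; rewrite mulr0 subr0.
have yS : y *m S = p *: y + q *: x.
  apply/rowP => j; have /rowP/(_ j) := wSc; rewrite !mxE => /(congr1 (@complex.Im R)).
  rewrite raddf_sum ImM addrC => <-.
  by apply: eq_bigr => i _; rewrite !mxE; case: (w 0 i) => ? ? /=; rewrite mulr0 add0r.
have gram_sym (u v : 'rV[R]_n.+1) : u *m S *m v^T = v *m S *m u^T.
  by rewrite -[LHS]trmx11 !trmx_mul trmxK symS mulmxA.
have q_norm : q * (frob2 x + frob2 y) = 0.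
  have := gram_sym x y; rewrite xS yS mulmxBl mulmxDl -!scalemxAl !mul_rV_trmx.
  rewrite -[y *m x^T]trmx11 trmx_mul trmxK => /(congr1 (fun M : 'M_1 => M 0 0)).
  rewrite !mxE /= !mulr1n => E; rewrite mulrDr; lra.
have xy_neq0 : (x != 0) || (y != 0).
  apply: contraNT w_neq0; rewrite negb_or !negbK => /andP[/eqP x0 /eqP y0].
  apply/eqP/rowP => j; move/rowP/(_ j): x0; move/rowP/(_ j): y0; rewrite !mxE.
  by case: (w 0 j) => ? ? /= -> ->.
have q0 : q = 0.
  have : 0 < frob2 x + frob2 y.
    have := frob2_ge0 x; have := frob2_ge0 y.
    by case/orP: xy_neq0; rewrite -frob2_gt0; lra.
  by move/gt_eqF => sum_neq0; apply/eqP; move/eqP: q_norm; rewrite mulf_eq0 sum_neq0 orbF.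
exists p; case/orP: xy_neq0 => [x_neq0|y_neq0].
  by apply: (symmetric_unit_eigenvector_of_row symS _ x_neq0); rewrite xS q0 scale0r subr0.
by apply: (symmetric_unit_eigenvector_of_row symS _ y_neq0); rewrite yS q0 scale0r addr0.
Qed.

End SymmetricEigenvector.

Section Householder.
Variable R : realType.

(* The reflection in the hyperplane orthogonal to w; since 2 / 0 = 0, it is the
   identity for w = 0. *)
Definition householder n (w : 'cV[R]_n) : 'M[R]_n :=
  1%:M - (2 / frob2 w) *: (w *m w^T).

Lemma trmx_householder n (w : 'cV[R]_n) : (householder w)^T = householder w.
Proof. by rewrite /householder raddfB /= trmx1 linearZ /= trmx_mul trmxK. Qed.

Lemma householder0 n : householder (0 : 'cV[R]_n) = 1%:M.
Proof. by rewrite /householder mul0mx scaler0 subr0. Qed.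

Lemma householder_stiefel n (w : 'cV[R]_n) : stiefel (householder w).
Proof.
rewrite /stiefel trmx_householder.
have [->|w_neq0] := eqVneq w 0; first by rewrite householder0 mulmx1.
set c := 2 / frob2 w; set P := w *m w^T.
have PP : P *m P = frob2 w *: P.
  by rewrite /P mulmxA -(mulmxA w) trmx_mul_cV mul_mx_scalar scalemxAl.
have cc : c * c * frob2 w = c + c by rewrite /c; field; rewrite frob2_eq0.
rewrite /householder mulmxBl !mulmxBr mul1mx mulmx1 -!scalemxAl -!scalemxAr PP !scalerA cc.
by rewrite mul1mx scalerDl opprB addrK subrK.
Qed.

Lemma householder_swap n (u v : 'cV[R]_n) :
  frob2 u = frob2 v -> householder (u - v) *m v = u.
Proof.
move=> uv; set w := u - v.
have [w0|w_neq0] := eqVneq w 0.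
  by rewrite w0 householder0 mul1mx; move/eqP: w0; rewrite subr_eq0 => /eqP.
have wu : w^T *m u = - (w^T *m v).
  rewrite /w raddfB /= !mulmxBl !trmx_mul_cV uv opprB.
  by rewrite -[v^T *m u]trmx11 trmx_mul trmxK.
have wv : w^T *m v = (- frob2 w / 2)%:M.
  have ww : w^T *m w = - (w^T *m v) - w^T *m v by rewrite {3}/w mulmxBr wu.
  rewrite [LHS]mx11_scalar; congr (_%:M).
  move/(congr1 (fun M : 'M_1 => M 0 0)): ww; rewrite trmx_mul_cV !mxE /= mulr1n => ->.
  by field.
rewrite /householder mulmxBl mul1mx -scalemxAl -mulmxA wv mul_mx_scalar scalerA.
have -> : 2 / frob2 w * (- frob2 w / 2) = -1 by field; rewrite frob2_eq0.
by rewrite scaleN1r opprK /w addrC subrK.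
Qed.

End Householder.

Section PolarFactor.
Variable R : realType.

Definition contraction m n (M : 'M[R]_(m, n)) :=
  forall x : 'cV[R]_n, frob2 (M *m x) <= frob2 x.

Lemma stiefel_contraction m n (M : 'M[R]_(m, n)) : stiefel M -> contraction M.
Proof. by move=> hM x; rewrite frob2_stiefel_mull. Qed.

Lemma contraction_mul m n p (A : 'M[R]_(m, n)) (B : 'M[R]_(n, p)) :
  contraction A -> contraction B -> contraction (A *m B).
Proof. by move=> hA hB x; rewrite -mulmxA; apply: le_trans (hA _) (hB x). Qed.

Lemma contraction_drsubmx m1 m2 n1 n2 (M : 'M[R]_(m1 + m2, n1 + n2)) :
  contraction M -> contraction (drsubmx M).
Proof.
move=> hM x; have := hM (col_mx 0 x); rewrite frob2_col_mx frob20 add0r; apply: le_trans.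
rewrite -[M in _ <= frob2 (M *m _)](vsubmxK M) mul_col_mx frob2_col_mx -[dsubmx M]hsubmxK.
by rewrite mul_row_col mulmx0 add0r lerDr frob2_ge0.
Qed.

Lemma exists_unit_left_kernel m n (Y : 'M[R]_(m, n)) : (\rank Y < m)%N ->
  exists u : 'cV[R]_m, frob2 u = 1 /\ Y^T *m u = 0.
Proof.
move=> rkY; have : kermx Y != 0 by rewrite -mxrank_eq0 mxrank_ker subn_eq0 -ltnNge.
case/rowV0Pn => t /sub_kermxP tY t_neq0.
exists ((Num.sqrt (frob2 t^T))^-1 *: t^T); split.
  by apply: frob2_normalize; rewrite trmx_eq0.
by rewrite -scalemxAr -trmx_mul tY trmx0 scaler0.
Qed.

Lemma exists_singular_pair m n (M : 'M[R]_(m, n.+1)) : (n < m)%N ->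
  exists s (u : 'cV[R]_m) (v : 'cV[R]_n.+1),
    [/\ 0 <= s, frob2 u = 1, frob2 v = 1, M *m v = s *: u & M^T *m u = s *: v].
Proof.
move=> lt_nm; have symMM : (M^T *m M)^T = M^T *m M by rewrite trmx_mul trmxK.
have [l [v [MMv v1]]] := symmetric_unit_eigenvector symMM.
have [Mv0|Mv_neq0] := eqVneq (M *m v) 0.
  have rkM : (\rank M < m)%N.
    have : (v^T <= kermx M^T)%MS by apply/sub_kermxP; rewrite -trmx_mul Mv0 trmx0.
    move/mxrankS; rewrite mxrank_ker rank_rV mxrank_tr trmx_eq0 -frob2_eq0 v1 oner_eq0.
    by move: (\rank M) lt_nm => k; lia.
  have [u [u1 Mu]] := exists_unit_left_kernel rkM.
  by exists 0, u, v; rewrite Mv0 Mu !scale0r.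
set s := Num.sqrt (frob2 (M *m v)).
have s_gt0 : 0 < s by rewrite sqrtr_gt0 frob2_gt0.
have l_s2 : l = s ^+ 2.
  rewrite sqr_sqrtr ?frob2_ge0 // frob2_tr trmx_mul -mulmxA (mulmxA M^T) MMv.
  by rewrite -scalemxAr mxtraceZ -frob2_tr v1 mulr1.
exists s, (s^-1 *: (M *m v)), v; split => //.
- exact: ltW.
- exact: frob2_normalize.
- by rewrite scalerA mulfV ?gt_eqF // scale1r.
by rewrite -scalemxAr mulmxA MMv scalerA l_s2 expr2 mulKf ?gt_eqF.
Qed.

Lemma block_mx_first_col_row m n (X : 'M[R]_(1 + m, 1 + n)) s :
  X *m delta_mx 0 0 = s *: (delta_mx 0 0 : 'cV_(1 + m)) ->
  (delta_mx 0 0 : 'rV_(1 + m)) *m X = s *: delta_mx 0 0 ->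
  X = block_mx s%:M 0 0 (drsubmx X).
Proof.
rewrite -colE -rowE => /colP X_col /rowP X_row.
have Xc i : X i 0 = s * (i == 0)%:R by move: (X_col i); rewrite !mxE andbT.
have Xr j : X 0 j = s * (j == 0)%:R by move: (X_row j); rewrite !mxE.
have lshift0 k : lshift k (0 : 'I_1) = 0 by apply: val_inj.
rewrite -[LHS](submxK X); congr block_mx; apply/matrixP => i j; rewrite !ord1 !mxE !lshift0.
- by rewrite Xc mulr1.
- by rewrite Xr mulr0.
- by rewrite Xc mulr0.
Qed.

Lemma stiefel_block_diag m1 m2 n1 n2 (A : 'M[R]_(m1, n1)) (B : 'M[R]_(m2, n2)) :
  stiefel A -> stiefel B -> stiefel (block_mx A 0 0 B).
Proof.
rewrite /stiefel tr_block_mx !trmx0 mulmx_block !mulmx0 !mul0mx !addr0 add0r => -> ->.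
by rewrite -scalar_mx_block.
Qed.

Lemma orthogonal_block_reduction m n (M : 'M[R]_(1 + m, 1 + n)) : (n <= m)%N ->
  exists (G : 'M[R]_(1 + m)) (H : 'M[R]_(1 + n)) s,
    [/\ stiefel G, stiefel H, 0 <= s
      & G^T *m M *m H = block_mx s%:M 0 0 (drsubmx (G^T *m M *m H))].
Proof.
move=> le_nm; have [s [u [v [s_ge0 u1 v1 Mv MTu]]]] := exists_singular_pair M le_nm.
pose e : 'cV[R]_(1 + m) := delta_mx 0 0; pose f : 'cV[R]_(1 + n) := delta_mx 0 0.
set G := householder (u - e); set H := householder (v - f).
have Ge : G *m e = u by apply: householder_swap; rewrite u1 frob2_delta_cV.
have Hf : H *m f = v by apply: householder_swap; rewrite v1 frob2_delta_cV.
have GTu : G^T *m u = e by rewrite -Ge mulmxA householder_stiefel mul1mx.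
have HTv : H^T *m v = f by rewrite -Hf mulmxA householder_stiefel mul1mx.
exists G, H, s; split => //; try exact: householder_stiefel.
apply: block_mx_first_col_row.
  by rewrite -!mulmxA Hf Mv -scalemxAr GTu.
rewrite -[delta_mx 0 0]trmx_delta !mulmxA -trmx_mul Ge -[M]trmxK -trmx_mul MTu linearZ /=.
by rewrite -scalemxAl -[H]trmxK -trmx_mul HTv trmx_delta.
Qed.

Lemma contraction_polar m n (M : 'M[R]_(m, n)) : (n <= m)%N -> contraction M ->
  exists V : 'M[R]_(m, n), stiefel V /\ frob2 M <= \tr (V^T *m M).
Proof.
elim: n m M => [|n IHn] m M le_nm hM.
  exists 0; split; first by apply/matrixP => -[].
  by rewrite /mxtrace big_ord0 /frob2 big1 // => i _; rewrite big_ord0.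
case: m M le_nm hM => [|m] // M le_nm hM.
have [G [H [s [sG sH s_ge0 XE]]]] := orthogonal_block_reduction (M : 'M_(1 + m, 1 + n)) le_nm.
set X := G^T *m M *m H in XE; set M' := drsubmx X in XE.
have hX : contraction X.
  apply: contraction_mul; last exact: stiefel_contraction.
  by apply: contraction_mul => //; apply/stiefel_contraction/stiefel_trmx.
have [V' [sV' trV']] := IHn m M' le_nm (contraction_drsubmx hX).
have s_le1 : s <= 1.
  have := hX (col_mx 1%:M 0); rewrite XE mul_block_col !mul0mx !mulmx0 mulmx1 !addr0.
  by rewrite !frob2_col_mx !frob20 !addr0 !frob2_scalar1 expr1n; nra.
exists (G *m block_mx 1%:M 0 0 V' *m H^T); split.
  apply: stiefel_mul; last exact: stiefel_trmx.
  by apply: stiefel_mul => //; apply: stiefel_block_diag => //; rewrite /stiefel trmx1 mulmx1.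
have -> : \tr ((G *m block_mx 1%:M 0 0 V' *m H^T)^T *m M) = s + \tr (V'^T *m M').
  rewrite !trmx_mul trmxK -!mulmxA mxtrace_mulC -!mulmxA (mulmxA G^T) -/X XE.
  rewrite tr_block_mx !trmx0 trmx1 mulmx_block !mulmx0 !mul0mx mul1mx !addr0 add0r.
  by rewrite mxtrace_block trace_mx11 mxE mulr1n.
have -> : frob2 M = s ^+ 2 + frob2 M'.
  rewrite -(frob2_stiefel_mulr M (stiefel_trmx sH)).
  rewrite -(frob2_stiefel_mull (M *m H) (stiefel_trmx sG)).
  by rewrite mulmxA -/X XE frob2_block !frob20 !addr0 frob2_scalar1.
have : s ^+ 2 <= s by nra.
lra.
Qed.

End PolarFactor.

Section ResidualBounds.
Variable R : realType.

Lemma frob2_stiefel_blocks m1 m2 n1 n2 (Q : 'M[R]_(m1 + m2, n1 + n2)) : stiefel Q ->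
  frob2 (ulsubmx Q) + frob2 (dlsubmx Q) = n1%:R /\
  frob2 (ursubmx Q) + frob2 (drsubmx Q) = n2%:R.
Proof.
rewrite /stiefel -{1 2}(submxK Q) tr_block_mx mulmx_block (scalar_mx_block n1 n2 1).
by case/eq_block_mx => h1 _ _ h4; rewrite !frob2_tr -!mxtraceD h1 h4 !mxtrace1.
Qed.

Lemma frob2_row_ul_ur_le1 m1 m2 n1 n2 (Q : 'M[R]_(m1 + m2, n1 + n2)) i : stiefel Q ->
  frob2 (row i (ulsubmx Q)) + frob2 (row i (ursubmx Q)) <= 1.
Proof.
move=> sQ; have := stiefel_row_le1 (lshift m2 i) sQ.
by rewrite -row_usubmx -[usubmx Q]hsubmxK row_row_mx frob2_row_mx.
Qed.

Lemma frob2_sub_stiefel m n (M V : 'M[R]_(m, n)) : stiefel V ->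
  frob2 (M - V) = frob2 M - \tr (V^T *m M) *+ 2 + n%:R.
Proof.
move=> sV; have trVM : \tr (M^T *m V) = \tr (V^T *m M).
  by rewrite -mxtrace_tr trmx_mul trmxK.
rewrite !frob2_tr [(M - V)^T]linearB /= mulmxBl !mulmxBr !raddfB /= trVM sV mxtrace1; ring.
Qed.

Lemma frob2_sub_mulmx_trmx p q (A Q : 'M[R]_(p, q)) : stiefel Q ->
  frob2 (A - Q *m A^T *m Q) =
  frob2 A - frob2 (A^T *m Q) + frob2 (A^T *m Q - (A^T *m Q)^T).
Proof.
move=> sQ; set B := A^T *m Q.
have trBB : \tr (B^T *m B^T) = \tr (B *m B) by rewrite -mxtrace_tr trmx_mul trmxK.
have trBBt : \tr (B *m B^T) = \tr (B^T *m B) by rewrite mxtrace_mulC.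
have QtA : Q^T *m A = B^T by rewrite /B trmx_mul trmxK.
rewrite -mulmxA !frob2_tr [(A - _)^T]linearB [(B - _)^T]linearB /= trmx_mul trmxK.
rewrite !mulmxBl !mulmxBr !raddfB /=.
rewrite (mulmxA A^T Q) -/B -(mulmxA B^T Q^T) QtA.
rewrite (mulmxA (B^T *m Q^T)) -(mulmxA B^T Q^T Q) sQ mulmx1.
rewrite trBB trBBt; ring.
Qed.

Lemma frob2_resid_ge r m n (a : 'rV[R]_r) (Q : 'M[R]_(r + m, r + n)) :
  stiefel Q ->
  \sum_i a 0 i ^+ 2 * (1 - frob2 (row i (ulsubmx Q))) <= frob2 (resid a Q).
Proof.
move=> sQ; rewrite /resid frob2_sub_mulmx_trmx //; set D := diag_mx a.
have -> : (Amat m n a)^T *m Q = block_mx (D *m ulsubmx Q) (D *m ursubmx Q) 0 0.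
  by rewrite /Amat tr_block_mx !trmx0 tr_diag_mx -{1}(submxK Q) mulmx_block !mul0mx !addr0.
have -> : frob2 (Amat m n a) = \sum_i a 0 i ^+ 2.
  rewrite /Amat frob2_block !frob20 !addr0 -[diag_mx a]mulmx1 frob2_diag_mul.
  by apply: eq_bigr => i _; rewrite row1 -trmx_delta frob2_trmx frob2_delta_cV mulr1.
rewrite tr_block_mx !trmx0 opp_block_mx add_block_mx !frob2_block !frob20 !addr0 subr0.
rewrite frob2_diag_mul subrr frob20 addr0.
have -> : \sum_i a 0 i ^+ 2 * (1 - frob2 (row i (ulsubmx Q))) =
    \sum_i a 0 i ^+ 2 - \sum_i a 0 i ^+ 2 * frob2 (row i (ulsubmx Q)).
  by rewrite -sumrB; apply: eq_bigr => i _; rewrite mulrBr mulr1.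
have := frob2_ge0 (D *m ulsubmx Q - (D *m ulsubmx Q)^T).
have := frob2_ge0 (0 - (D *m ursubmx Q)^T).
lra.
Qed.

Lemma frob2_ursubmx_le_resid r m n (a : 'rV[R]_r) (Q : 'M[R]_(r + m, r + n)) c :
  (forall i, c ^+ 2 <= a 0 i ^+ 2) -> stiefel Q ->
  c ^+ 2 * frob2 (ursubmx Q) <= frob2 (resid a Q).
Proof.
move=> ca sQ; apply: le_trans (frob2_resid_ge a sQ).
rewrite frob2_rows mulr_sumr; apply: ler_sum => i _.
have := frob2_row_ul_ur_le1 i sQ; have := frob2_ge0 (row i (ursubmx Q)).
have := ca i; have := sqr_ge0 c; nra.
Qed.

Lemma frob2_dlsubmx_le_resid r m n (a : 'rV[R]_r) (Q : 'M[R]_(r + m, r + n)) c :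
  (forall i, c ^+ 2 <= a 0 i ^+ 2) -> stiefel Q ->
  c ^+ 2 * frob2 (dlsubmx Q) <= frob2 (resid a Q).
Proof.
move=> ca sQ; apply: le_trans (frob2_resid_ge a sQ).
have [frob2Q13 _] := frob2_stiefel_blocks sQ.
have -> : frob2 (dlsubmx Q) = \sum_(i < r) (1 - frob2 (row i (ulsubmx Q))).
  by rewrite sumrB sumr_const card_ord -frob2Q13 -frob2_rows addrC addKr.
rewrite mulr_sumr; apply: ler_sum => i _.
have := frob2_row_ul_ur_le1 i sQ; have := frob2_ge0 (row i (ursubmx Q)).
have := ca i; have := sqr_ge0 c; nra.
Qed.

Lemma stiefel_close_to_drsubmx m1 m2 n1 n2 (Q : 'M[R]_(m1 + m2, n1 + n2)) :
  (n2 <= m2)%N -> stiefel Q ->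
  exists V : 'M[R]_(m2, n2), stiefel V /\ frob2 (drsubmx Q - V) <= frob2 (ursubmx Q).
Proof.
move=> le_nm sQ.
have [V [sV trV]] := contraction_polar le_nm (contraction_drsubmx (stiefel_contraction sQ)).
exists V; split => //; rewrite frob2_sub_stiefel //.
have [_ frob2Q24] := frob2_stiefel_blocks sQ.
lra.
Qed.

End ResidualBounds.

(* r = r'.+1 (so 1 <= r), d = r + m, K = r + n, with K <= d i.e. n <= m. *)
Theorem proposition4 (R : realType) (r' m n : nat) (a : 'rV[R]_(r'.+1))
  (Q : 'M[R]_(r'.+1 + m, r'.+1 + n)) :
  (n <= m)%N ->
  (forall i j : 'I_(r'.+1), (i <= j)%N -> a 0 j <= a 0 i) ->
  0 < a 0 ord_max ->
  stiefel Q ->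
  [/\ a 0 ord_max ^+ 2 * frob2 (ursubmx Q) <= frob2 (resid a Q),
      a 0 ord_max ^+ 2 * frob2 (dlsubmx Q) <= frob2 (resid a Q)
    & exists V : 'M[R]_(m, n), stiefel V /\
        frob2 (drsubmx Q - V) <= frob2 (ursubmx Q)].
Proof.
move=> le_nm a_antitone a_r_gt0 sQ.
have a_r_min i : a 0 ord_max ^+ 2 <= a 0 i ^+ 2.
  by have := a_antitone i ord_max (leq_ord i); nra.
split.
- exact: frob2_ursubmx_le_resid.
- exact: frob2_dlsubmx_le_resid.
- exact: stiefel_close_to_drsubmx.
Qed.
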